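(* Let $G$, $D$, $F$, $E$, $\Lambda$ be as in the context. Let $M\subseteq\Lambda$ be a left ideal that is right generic with respect to $D$. Let $Y$ be a left $\Lambda$-module and $Z\subseteq Y$ a left $E[D]$-submodule such that $Y$ and $Z$ admit compatible rational structures (a left $\Lambda_F$-module $Y_F$ and an $F[D]$-submodule $Z_F\subseteq Y_F$ with $Y=Y_F\otimes_FE$, $Z=Z_F\otimes_FE$ compatibly with $Z\subseteq Y$), and suppose $Y$ admits an injective $\Lambda$-module homomorphism $Y\to\Lambda$. Then for every left ideal $N\subseteq\Lambda$ isomorphic to $M$ as a left $\Lambda$-module, $\dim\mathrm{Hom}_G(\Lambda/M,Y;Z)\le\dim\mathrm{Hom}_G(\Lambda/N,Y;Z)$.
   Context: $G$ is a finite group, $D\subseteq G$ a subgroup, $F$ a field of characteristic zero over which all irreducible representations of $G$ are defined, $E\supseteq F$, $\Lambda_F=F[G]$, $\Lambda=E[G]=\Lambda_F\otimes_FE$. A right rational $D$-subspace of $\Lambda$ is $V=V_F\otimes_FE$ with $V_F$ a right $F[D]$-submodule of $\Lambda_F$. A left ideal $M$ is right generic with respect to $D$ if $\dim(M\cap V)\le\dim(N\cap V)$ for all right rational $D$-subspaces $V$ and all left ideals $N\cong M$ as left $\Lambda$-modules. For a left ideal $M$, $\mathrm{Hom}_G(\Lambda/M,Y;Z)$ denotes the set of $G$-equivariant homomorphisms $\phi:\Lambda/M\to Y$ with $\phi([1]\bmod M)\in Z$. *)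

From HB Require Import structures.
From mathcomp Require Import all_boot all_order all_algebra all_fingroup all_character.
Set Implicit Arguments. Unset Strict Implicit. Unset Printing Implicit Defensive.
Import GRing.Theory.
Local Open Scope ring_scope.

(* The finite group G is the whole finGroupType gT.
   The group algebra R[G] is modelled as the space of row vectors 'rV[R]_#|gT|,
   the basis vector of index i standing for the group element enum_val i.
   Subspaces are row spaces of matrices (mxalgebra, scope %MS).
   Linear maps act on row vectors on the right: v |-> v *m A. *)

Section GroupAlgebra.
Variables (gT : finGroupType) (R : nzRingType).

Definition lmul (g : gT) : 'M[R]_#|gT| :=
  \matrix_(i, j) ((enum_val j == g * enum_val i)%g)%:R.

Definition rmul (g : gT) : 'M[R]_#|gT| :=
  \matrix_(i, j) ((enum_val j == enum_val i * g)%g)%:R.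

Definition idx1 : 'I_#|gT| := enum_rank (1%g : gT).

End GroupAlgebra.

Section Defs.
Variables (gT : finGroupType) (E : fieldType).
Local Notation n := #|gT|.

Definition left_ideal (M : 'M[E]_n) : Prop :=
  forall g : gT, (M *m lmul E g <= M)%MS.

Definition ideal_iso (M N : 'M[E]_n) : Prop :=
  exists f : 'M[E]_n,
    [/\ (M *m f == N)%MS, \rank (M *m f) = \rank M &
        forall g : gT, M *m lmul E g *m f = M *m f *m lmul E g].

(* right rational D-subspaces: V = V_F (x)_F E with V_F a right F[D]-submodule
   of F[G]; the rational structure comes from the field embedding iota. *)
Definition right_rational_sub (F : fieldType) (D : {set gT})
    (VF : 'M[F]_n) : Prop :=
  forall d, d \in D -> (VF *m rmul F d <= VF)%MS.

Definition right_generic (F : fieldType) (iota : {rmorphism F -> E})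
    (D : {set gT}) (M : 'M[E]_n) : Prop :=
  forall (VF : 'M[F]_n) (N : 'M[E]_n),
    right_rational_sub D VF -> left_ideal N -> ideal_iso M N ->
    (\rank (M :&: map_mx iota VF) <= \rank (N :&: map_mx iota VF))%N.

(* A left module structure on row vectors of length m:
   g . y := y *m rho g, so rho (g * h) = rho h *m rho g. *)
Definition is_left_rep (R : nzRingType) m (rho : gT -> 'M[R]_m) : Prop :=
  rho 1%g = 1%:M /\ forall g h, rho (g * h)%g = rho h *m rho g.

(* Hom_G(E[G]/M, Y; Z), with a homomorphism E[G]/M -> Y represented by its
   composite phi : E[G] -> Y with the projection (a linear map killing M). *)
Definition homG (M : 'M[E]_n) m (rho : gT -> 'M[E]_m) (Z : 'M[E]_m)
    (phi : 'M[E]_(n, m)) : Prop :=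
  [/\ M *m phi = 0,
      forall g, lmul E g *m phi = phi *m rho g &
      (row (idx1 gT) phi <= Z)%MS].

Definition homG_space (M : 'M[E]_n) m (rho : gT -> 'M[E]_m) (Z : 'M[E]_m)
    : 'M[E]_(n * m) :=
  (kermx (lin_mx (mulmx M))
   :&: (\bigcap_(g : gT) kermx (lin_mx (fun phi : 'M[E]_(n, m) =>
                                          lmul E g *m phi - phi *m rho g)))
   :&: kermx (lin_mx (fun phi : 'M[E]_(n, m) => row (idx1 gT) phi *m cokermx Z)))%MS.

Definition homG_dim (M : 'M[E]_n) m (rho : gT -> 'M[E]_m) (Z : 'M[E]_m) : nat :=
  \rank (homG_space M rho Z).

End Defs.

Lemma lin_mx_vecE (E : fieldType) m1 n1 m2 n2 (f : 'M[E]_(m1,n1) -> 'M[E]_(m2,n2))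
  (fL : forall a x y, f (a *: x + y) = a *: f x + f y) A :
  mxvec A *m lin_mx f = mxvec (f A).
Proof.
pose h := mxvec \o f \o vec_mx.
have hL : linear h.
  by move=> a x y; rewrite /h /= linearP fL linearP.
pose hh : {linear 'rV[E]_(m1 * n1) -> 'rV[E]_(m2 * n2)} :=
  HB.pack h (GRing.isLinear.Build _ _ _ _ h hL).
by rewrite /lin_mx (mul_rV_lin1 hh) /= /h /= mxvecK.
Qed.

Lemma homG_spaceP (gT : finGroupType) (E : fieldType) (M : 'M[E]_#|gT|) m
  (rho : gT -> 'M[E]_m) (Z : 'M[E]_m) (phi : 'M[E]_(#|gT|, m)) :
  (mxvec phi <= homG_space M rho Z)%MS <-> homG M rho Z phi.
Proof.
have e1 : (mxvec phi <= kermx (lin_mx (mulmx M)))%MS = (M *m phi == 0).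
  by rewrite sub_kermx lin_mx_vecE ?mxvec_eq0 // => a x y; rewrite mulmxDr scalemxAr.
have e2 : forall g, (mxvec phi <= kermx (lin_mx (fun phi : 'M[E]_(#|gT|, m) =>
             lmul E g *m phi - phi *m rho g)))%MS = (lmul E g *m phi == phi *m rho g).
  move=> g; rewrite sub_kermx lin_mx_vecE ?mxvec_eq0 ?subr_eq0 //.
  move=> a x y; rewrite mulmxDr mulmxDl -scalemxAr scalemxAl scalerBr.
  by rewrite ?scalemxAl opprD addrACA.
have e3 : (mxvec phi <= kermx (lin_mx (fun phi : 'M[E]_(#|gT|, m) =>
              row (idx1 gT) phi *m cokermx Z)))%MS = (row (idx1 gT) phi <= Z)%MS.
  rewrite sub_kermx lin_mx_vecE ?mxvec_eq0 -?submxE //.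
  by move=> a x y; rewrite linearP mulmxDl -scalemxAl.
rewrite /homG_space !sub_capmx e1 e3; split.
  case/andP=> /andP[/eqP HM /sub_bigcapmxP Hg] HZ; split => // g.
  by apply/eqP; rewrite -e2; apply: Hg.
case=> -> Hg ->; rewrite eqxx andbT /=; apply/sub_bigcapmxP => g _.
by rewrite e2 Hg.
Qed.

From HB Require Import structures.
From mathcomp Require Import all_boot all_order all_algebra all_fingroup all_character.
Set Implicit Arguments. Unset Strict Implicit. Unset Printing Implicit Defensive.
Import GRing.Theory.
Local Open Scope ring_scope.

(* Write rho for the action of G on Y and T_c for the
   orbit matrix of a column vector c, whose column of index g is rho(g) c.
   A G-map E[G] -> Y is determined by the image y of 1, so Hom_G(E[G]/X, Y; Z)
   is the space of y in Z whose G-map kills the left ideal X.  If T_c has full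
   row rank (c is a "cyclic vector" of the dual of Y), this condition reads
   y T_c X^T = 0, and rank-nullity applied to Z T_c X^T and to its transpose
   X T_c^T Z^T gives, for every left ideal X,
        dim Hom_G(E[G]/X, Y; Z) + dim X = dim Z + dim (X :&: ker(T_c^T Z^T)).
   A cyclic vector exists because Y embeds in E[G]; since F is infinite
   (characteristic 0) it can be chosen rational, and then ker(T_c^T Z^T) is a
   right rational D-subspace.  Genericity of M and dim M = dim N conclude. *)

(* Over an infinite field of scalars F inside E, a nonzero polynomial over E
   does not vanish at some point of F; by induction on coordinates, a linear
   family of matrices that is somewhere invertible is invertible at an
   F-rational parameter. *)
Section RationalPoints.
Variables (F E : fieldType) (iota : {rmorphism F -> E}).
Hypothesis charF0 : [pchar F] =i pred0.

Lemma natr_inj_pchar0 : injective (fun n : nat => n%:R : F).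
Proof.
have natr_eq0 := (pcharf0P F).1 charF0.
move=> i j /= eq_ij; wlog le_ij : i j eq_ij / (i <= j)%N.
  by move=> W; case: (leqP i j) => [|/ltnW] le; [exact: W | exact/esym/W].
by apply/eqP; rewrite eqn_leq le_ij -subn_eq0 -natr_eq0 natrB // eq_ij subrr eqxx.
Qed.

(* A nonzero polynomial has fewer roots than its size, while F contains
   infinitely many distinct integers. *)
Lemma exists_rational_nonroot (P : {poly E}) :
  P != 0 -> exists a : F, P.[iota a] != 0.
Proof.
move=> nzP; pose cands := [seq iota i%:R | i <- seq.iota 0 (size P)].
have [/hasP [_ /mapP [i _ ->] nz] | /hasPn allroots] :=
  boolP (has (fun x => P.[x] != 0) cands); first by exists i%:R.
suff : (size cands < size P)%N by rewrite size_map size_iota ltnn.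
apply: max_poly_roots nzP _ _.
  by apply/allP => x /allroots; rewrite negbK.
by rewrite map_inj_uniq ?iota_uniq // => i j /fmorph_inj /natr_inj_pchar0.
Qed.

Variables (m p : nat) (L : 'cV[E]_m -> 'M[E]_p).
Hypothesis L_linear : forall a c c', L (a *: c + c') = a *: L c + L c'.

(* Along the i-th coordinate line through c, det L is a polynomial which is
   nonzero at c, hence nonzero at some rational value of the i-th coordinate. *)
Lemma det_coordinate_change c i :
  \det (L c) != 0 ->
  exists a : F, \det (L (c + (iota a - c i 0) *: delta_mx i 0)) != 0.
Proof.
move=> nz; pose d : 'cV[E]_m := delta_mx i 0.
pose P := \det (\matrix_(r, s) ((L c r s)%:P + ('X - (c i 0)%:P) * (L d r s)%:P)).
have PE t : P.[t] = \det (L (c + (t - c i 0) *: d)).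
  rewrite [c + _]addrC L_linear -horner_evalE -det_map_mx; congr (\det _).
  by apply/matrixP => r s; rewrite !mxE /= horner_evalE !hornerE addrC.
have nzP : P != 0.
  have P_at_c : P.[c i 0] = \det (L c) by rewrite PE subrr scale0r addr0.
  by apply: contraNneq nz => P0; rewrite -P_at_c P0 horner0.
have [a nza] := exists_rational_nonroot nzP.
by exists a; rewrite -PE.
Qed.

(* Make the coordinates rational one at a time, keeping det L nonzero. *)
Lemma rational_point c0 :
  \det (L c0) != 0 -> exists cF : 'cV[F]_m, \det (L (map_mx iota cF)) != 0.
Proof.
move=> nz0.
have prefix k : exists2 c, \det (L c) != 0 &
    forall i : 'I_m, (i < k)%N -> exists a, iota a == c i 0.
  elim: k => [|k [c nz rat]]; first by exists c0.
  have [km | mk] := ltnP k m; last first.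
    by exists c => // i ik; apply: rat; rewrite (leq_trans (ltn_ord i) mk).
  have [a nza] := det_coordinate_change (Ordinal km) nz.
  exists (c + (iota a - c (Ordinal km) 0) *: delta_mx (Ordinal km) 0) => // i ik.
  rewrite !mxE eqxx andbT.
  have [-> | neq] := eqVneq i (Ordinal km); first by exists a; rewrite mulr1 addrC subrK.
  rewrite mulr0 addr0; apply: rat; rewrite ltn_neqAle -ltnS ik andbT.
  by apply: contraNneq neq => eq_ik; apply/eqP/val_inj.
have [c nz rat] := prefix m.
exists (\col_i xchoose (rat i (ltn_ord i))).
congr (\det (L _) != 0): nz; apply/matrixP => i j.
by rewrite (ord1 j) !mxE (eqP (xchooseP (rat i (ltn_ord i)))).
Qed.

End RationalPoints.

Lemma enum_val_eq (T : finType) (j : 'I_#|T|) (x : T) :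
  (enum_val j == x) = (j == enum_rank x).
Proof. by rewrite -(inj_eq enum_rank_inj) enum_valK. Qed.

Lemma row_lmul (gT : finGroupType) (R : nzRingType) p (g : gT) i
    (A : 'M[R]_(#|gT|, p)) :
  row i (lmul R g *m A) = row (enum_rank (g * enum_val i)%g) A.
Proof.
rewrite row_mul [RHS]rowE; congr (_ *m _); apply/rowP => b.
by rewrite !mxE enum_val_eq eqxx.
Qed.

Lemma row_rmul (gT : finGroupType) (R : nzRingType) p (g : gT) i
    (A : 'M[R]_(#|gT|, p)) :
  row i (rmul R g *m A) = row (enum_rank (enum_val i * g)%g) A.
Proof.
rewrite row_mul [RHS]rowE; congr (_ *m _); apply/rowP => b.
by rewrite !mxE enum_val_eq eqxx.
Qed.

Lemma col_lmul (gT : finGroupType) (R : nzRingType) p (g : gT) i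
    (A : 'M[R]_(p, #|gT|)) :
  col i (A *m lmul R g) = col (enum_rank (g^-1 * enum_val i)%g) A.
Proof.
rewrite colE -mulmxA -colE [RHS]colE; congr (_ *m _); apply/colP => k.
rewrite !mxE eqxx andbT -enum_val_eq.
suff -> : (enum_val i == (g * enum_val k)%g) = (enum_val k == (g^-1 * enum_val i)%g) by [].
by apply/eqP/eqP => [->|->]; rewrite ?mulKg ?mulKVg.
Qed.

Section CyclicHoms.
Variables (gT : finGroupType) (R : comNzRingType) (m : nat) (rho : gT -> 'M[R]_m).
Hypothesis rho_rep : is_left_rep rho.

(* The G-map R[G] -> Y sending 1 to y: its row of index g is g . y. *)
Definition cyclic_hom (y : 'rV[R]_m) : 'M[R]_(#|gT|, m) :=
  \matrix_(i, k) (y *m rho (enum_val i)) 0 k.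

Definition orbit_mx (c : 'cV[R]_m) : 'M[R]_(m, #|gT|) :=
  \matrix_(k, i) (rho (enum_val i) *m c) k 0.

Lemma row_cyclic_hom y i : row i (cyclic_hom y) = y *m rho (enum_val i).
Proof. by apply/rowP => k; rewrite !mxE. Qed.

Lemma col_orbit_mx c i : col i (orbit_mx c) = rho (enum_val i) *m c.
Proof. by apply/colP => k; rewrite !mxE. Qed.

Lemma cyclic_hom_equivariant y g :
  lmul R g *m cyclic_hom y = cyclic_hom y *m rho g.
Proof.
apply/row_matrixP => i; rewrite row_lmul row_mul !row_cyclic_hom enum_rankK.
by rewrite rho_rep.2 mulmxA.
Qed.

Lemma cyclic_hom_at1 y : row (idx1 gT) (cyclic_hom y) = y.
Proof. by rewrite row_cyclic_hom /idx1 enum_rankK rho_rep.1 mulmx1. Qed.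

Lemma equivariant_cyclic_hom phi :
  (forall g, lmul R g *m phi = phi *m rho g) ->
  phi = cyclic_hom (row (idx1 gT) phi).
Proof.
move=> phiG; apply/row_matrixP => i; rewrite row_cyclic_hom -row_mul -phiG.
by rewrite row_lmul /idx1 enum_rankK mulg1 enum_valK.
Qed.

Lemma cyclic_hom_orbit_mx y c : cyclic_hom y *m c = (orbit_mx c)^T *m y^T.
Proof.
apply/colP => i; rewrite -trmx_mul !mxE.
transitivity ((y *m rho (enum_val i) *m c) 0 0).
  by rewrite !mxE; apply: eq_bigr => k _; rewrite !mxE.
by rewrite -mulmxA !mxE; apply: eq_bigr => k _; rewrite !mxE.
Qed.

Lemma mul_orbit_mx c p (A : 'M[R]_(p, m)) :
  A *m orbit_mx c = \matrix_(r, i) ((A *m rho (enum_val i) *m c) r 0).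
Proof.
apply/matrixP => r i; rewrite [RHS]mxE -mulmxA !mxE; apply: eq_bigr => k _.
by rewrite !mxE.
Qed.

Lemma rmul_orbit_mx c d :
  rmul R d *m (orbit_mx c)^T = (orbit_mx c)^T *m (rho d)^T.
Proof.
apply/row_matrixP => i; rewrite row_rmul row_mul -!tr_col -trmx_mul.
by rewrite !col_orbit_mx enum_rankK rho_rep.2 mulmxA.
Qed.

Lemma orbit_mx_linear a c c' :
  orbit_mx (a *: c + c') = a *: orbit_mx c + orbit_mx c'.
Proof.
apply/matrixP => k i; rewrite !mxE mulr_sumr -big_split; apply: eq_bigr => j _.
by rewrite !mxE mulrDr mulrCA.
Qed.

End CyclicHoms.

Lemma map_orbit_mx (gT : finGroupType) (R S : comNzRingType)
    (f : {rmorphism R -> S}) m (rho : gT -> 'M[R]_m) c :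
  map_mx f (orbit_mx rho c) = orbit_mx (fun g => map_mx f (rho g)) (map_mx f c).
Proof.
apply/matrixP => k i; rewrite !mxE rmorph_sum; apply: eq_bigr => j _.
by rewrite !mxE rmorphM.
Qed.

Lemma map_left_rep (gT : finGroupType) (R S : nzRingType)
    (f : {rmorphism R -> S}) m (rho : gT -> 'M[R]_m) :
  is_left_rep rho -> is_left_rep (fun g => map_mx f (rho g)).
Proof. by case=> rho1 rhoM; split=> [|g h]; rewrite ?rho1 ?rhoM ?map_mx1 ?map_mxM. Qed.

Section HomDimension.
Variables (gT : finGroupType) (E : fieldType) (m : nat) (rho : gT -> 'M[E]_m).
Hypothesis rho_rep : is_left_rep rho.

Definition cyclic_hom_mx : 'M[E]_(m, #|gT| * m) :=
  lin1_mx (fun y => mxvec (cyclic_hom rho y)).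

Lemma mul_cyclic_hom_mx y : y *m cyclic_hom_mx = mxvec (cyclic_hom rho y).
Proof.
pose h y := mxvec (cyclic_hom rho y).
have h_linear : linear h.
  move=> a x z; rewrite /h -linearP; congr mxvec; apply/matrixP => i k.
  rewrite !mxE mulr_sumr -big_split; apply: eq_bigr => j _.
  by rewrite !mxE mulrDl mulrA.
pose hL : {linear 'rV[E]_m -> 'rV[E]_(#|gT| * m)} :=
  HB.pack h (GRing.isLinear.Build _ _ _ _ h h_linear).
exact: (mul_rV_lin1 hL).
Qed.

Lemma cyclic_hom_mx_free : row_free cyclic_hom_mx.
Proof.
rewrite -kermx_eq0; apply/rowV0P => y /sub_kermxP.
rewrite mul_cyclic_hom_mx => /eqP; rewrite mxvec_eq0 => /eqP hom0.
by rewrite -(cyclic_hom_at1 rho_rep y) hom0 row0.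
Qed.

Variable c : 'cV[E]_m.
Hypothesis orbit_free : row_free (orbit_mx rho c).
Local Notation T := (orbit_mx rho c).

(* The G-map with 1 |-> y kills the left ideal X iff y^T is killed by X T^T:
   X phi is G-stable, so it vanishes as soon as X phi c does. *)
Lemma cyclic_hom_kills X y : left_ideal X ->
  (X *m cyclic_hom rho y == 0) = (y <= kermx (T *m X^T))%MS.
Proof.
move=> X_ideal; rewrite sub_kermx.
have -> : y *m (T *m X^T) = (X *m cyclic_hom rho y *m c)^T.
  by rewrite -mulmxA cyclic_hom_orbit_mx !trmx_mul !trmxK mulmxA.
rewrite trmx_eq0; apply/eqP/eqP => [->|Xphi_c]; first by rewrite mul0mx.
have Xphi_rho_c g : X *m cyclic_hom rho y *m rho g *m c = 0.
  rewrite -(mulmxA X) -cyclic_hom_equivariant // mulmxA.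
  by have /submxP [W ->] := X_ideal g; rewrite -!mulmxA (mulmxA X) Xphi_c mulmx0.
apply: (row_free_inj orbit_free); rewrite mul0mx mul_orbit_mx.
by apply/matrixP => r i; rewrite [LHS]mxE Xphi_rho_c !mxE.
Qed.

Lemma homG_dim_kernel X Z : left_ideal X ->
  homG_dim X rho Z = \rank (Z :&: kermx (T *m X^T))%MS.
Proof.
move=> X_ideal; set K := (Z :&: _)%MS.
have homK y : (y <= K)%MS <-> homG X rho Z (cyclic_hom rho y).
  rewrite sub_capmx -cyclic_hom_kills // /homG cyclic_hom_at1 //; split.
    by case/andP => yZ /eqP X0; split => // g; apply: cyclic_hom_equivariant.
  by case=> X0 _ yZ; rewrite yZ X0 eqxx.
rewrite /homG_dim -(mxrankMfree K cyclic_hom_mx_free); apply: eqmx_rank.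
apply/andP; split; apply/row_subP => i; last first.
  by rewrite row_mul mul_cyclic_hom_mx; apply/homG_spaceP/homK/row_sub.
have hom_i : homG X rho Z (vec_mx (row i (homG_space X rho Z))).
  by apply/homG_spaceP; rewrite vec_mxK row_sub.
have [_ equiv_i _] := hom_i; have def_i := equivariant_cyclic_hom equiv_i.
rewrite -[row i _]vec_mxK def_i -mul_cyclic_hom_mx submxMr //.
by apply/homK; rewrite -def_i.
Qed.

(* Rank-nullity applied twice to the same product, read in both directions. *)
Lemma homG_dim_rank_identity X Z : left_ideal X ->
  (homG_dim X rho Z + \rank X = \rank Z + \rank (X :&: kermx (T^T *m Z^T)))%N.
Proof.
move=> X_ideal; rewrite homG_dim_kernel //.
have rankZ := mxrank_mul_ker Z (T *m X^T).
have rankX := mxrank_mul_ker X (T^T *m Z^T).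
have same_rank : \rank (Z *m (T *m X^T)) = \rank (X *m (T^T *m Z^T)).
  by rewrite -mxrank_tr !trmx_mul trmxK mulmxA.
by rewrite -rankZ -rankX same_rank addnCA addnA.
Qed.

End HomDimension.

(* If Y embeds G-equivariantly in E[G] via j, the coordinate of j at 1 is a
   cyclic vector: the orbit matrix of that column is j itself, reindexed. *)
Lemma embedding_cyclic_vector (gT : finGroupType) (E : fieldType) m
    (rho : gT -> 'M[E]_m) (j : 'M[E]_(m, #|gT|)) :
  row_free j -> (forall g, rho g *m j = j *m lmul E g) ->
  row_free (orbit_mx rho (col (idx1 gT) j)).
Proof.
move=> j_free j_equiv; rewrite -kermx_eq0; apply/rowV0P => y /sub_kermxP yT0.
have yT_yj i : (y *m orbit_mx rho (col (idx1 gT) j)) 0 i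
               = (y *m j) 0 (enum_rank (enum_val i)^-1%g).
  rewrite mul_orbit_mx mxE colE mulmxA -colE -mulmxA j_equiv mulmxA col_lmul.
  by rewrite /idx1 enum_rankK mulg1 mxE.
apply: (row_free_inj j_free); rewrite mul0mx; apply/rowP => l.
have := yT_yj (enum_rank (enum_val l)^-1%g).
by rewrite yT0 enum_rankK invgK enum_valK !mxE => <-.
Qed.

(* In characteristic 0 the cyclic vector can be chosen rational: row freeness
   of the orbit matrix is a nonvanishing determinant condition, linear in c. *)
Lemma rational_cyclic_vector (gT : finGroupType) (F E : fieldType)
    (iota : {rmorphism F -> E}) (charF0 : [pchar F] =i pred0) m
    (rhoF : gT -> 'M[F]_m) :
  (exists j : 'M[E]_(m, #|gT|),
     row_free j /\ forall g, map_mx iota (rhoF g) *m j = j *m lmul E g) ->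
  exists cF : 'cV[F]_m,
    row_free (orbit_mx (fun g => map_mx iota (rhoF g)) (map_mx iota cF)).
Proof.
set rho := fun g => map_mx iota (rhoF g); case=> j [j_free j_equiv].
have /row_freeP [B TB] := embedding_cyclic_vector j_free j_equiv.
have L_linear a c c' : orbit_mx rho (a *: c + c') *m B
    = a *: (orbit_mx rho c *m B) + orbit_mx rho c' *m B.
  by rewrite orbit_mx_linear mulmxDl scalemxAl.
have det0 : \det (orbit_mx rho (col (idx1 gT) j) *m B) != 0.
  by rewrite TB det1 oner_neq0.
have [cF unitTB] := @rational_point _ _ iota charF0 _ _
  (fun c => orbit_mx rho c *m B) L_linear _ det0.
exists cF; apply/row_freeP; exists (B *m invmx (orbit_mx rho (map_mx iota cF) *m B)).
by rewrite mulmxA mulmxV // unitmxE unitfE.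
Qed.

Lemma orbit_kernel_right_rational (gT : finGroupType) (D : {set gT})
    (F : fieldType) m (rhoF : gT -> 'M[F]_m) (ZF : 'M[F]_m) (cF : 'cV[F]_m) :
  is_left_rep rhoF -> (forall d, d \in D -> (ZF *m rhoF d <= ZF)%MS) ->
  right_rational_sub D (kermx ((orbit_mx rhoF cF)^T *m ZF^T)).
Proof.
move=> rep ZF_stable d dD; apply/sub_kermxP.
have /submxP [W defW] := ZF_stable d dD.
set K := _ *m ZF^T.
have rmulK : rmul F d *m K = K *m W^T.
  by rewrite mulmxA rmul_orbit_mx // -mulmxA -trmx_mul defW trmx_mul mulmxA.
by rewrite -mulmxA rmulK mulmxA mulmx_ker mul0mx.
Qed.

Lemma ideal_iso_rank (gT : finGroupType) (E : fieldType) (M N : 'M[E]_#|gT|) :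
  ideal_iso M N -> \rank N = \rank M.
Proof. by case=> f [/eqmx_rank <- -> _]. Qed.

Unset Implicit Arguments.

Theorem lemmaA12 (gT : finGroupType) (D : {group gT}) (F E : fieldType)
  (iota : {rmorphism F -> E})
  (charF0 : [pchar F] =i pred0)
  (splitF : group_splitting_field F [set: gT]%G)
  (M : 'M[E]_#|gT|) (HM : left_ideal M) (Mgen : right_generic iota D M)
  (m : nat) (rhoF : gT -> 'M[F]_m) (HrhoF : is_left_rep rhoF)
  (ZF : 'M[F]_m) (HZF : forall d, d \in D -> (ZF *m rhoF d <= ZF)%MS)
  (Hemb : exists j : 'M[E]_(m, #|gT|),
            row_free j /\ forall g, map_mx iota (rhoF g) *m j = j *m lmul E g)
  (N : 'M[E]_#|gT|) (HN : left_ideal N) (HMN : ideal_iso M N) :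
  (homG_dim M (fun g => map_mx iota (rhoF g)) (map_mx iota ZF)
   <= homG_dim N (fun g => map_mx iota (rhoF g)) (map_mx iota ZF))%N.
Proof.
set rho := fun g => map_mx iota (rhoF g).
have rho_rep : is_left_rep rho := map_left_rep iota HrhoF.
have [cF orbit_free] := rational_cyclic_vector charF0 Hemb.
set VF := kermx ((orbit_mx rhoF cF)^T *m ZF^T).
have VF_rational : right_rational_sub D VF.
  exact: orbit_kernel_right_rational HrhoF HZF.
have VF_scalars : kermx ((orbit_mx rho (map_mx iota cF))^T *m (map_mx iota ZF)^T)
                  = map_mx iota VF.
  by rewrite -map_orbit_mx map_kermx map_mxM !map_trmx.
have rank_identity := homG_dim_rank_identity rho_rep orbit_free (map_mx iota ZF).
rewrite -(leq_add2r (\rank M)) rank_identity // -(ideal_iso_rank HMN) rank_identity //.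
by rewrite leq_add2l VF_scalars; apply: Mgen.
Qed.
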